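(* Let $A$ be an MV-algebra, $d$ a $(\odot,\vee)$-derivation on $A$ and $a\in A$. If $d(a)\in\mathbf{B}(A)$, then $d(d(a))=d(a)$.
   Context: An MV-algebra is an algebra $(A,\oplus,{}^*,0)$ of type $(2,1,0)$ satisfying: $x\oplus(y\oplus z)=(x\oplus y)\oplus z$, $x\oplus y=y\oplus x$, $x\oplus 0=x$, $x^{**}=x$, $x\oplus 0^*=0^*$, $(x^*\oplus y)^*\oplus y=(y^*\oplus x)^*\oplus x$. Put $1=0^*$ and $x\odot y=(x^*\oplus y^* )^*$. The natural order is $x\le y$ iff $x^*\oplus y=1$, with lattice operations $x\vee y=(x\odot y^* )\oplus y$, $x\wedge y=x\odot(x^*\oplus y)$. The Boolean center is $\mathbf{B}(A)=\{x\in A: x\oplus x=x\}$. A $(\odot,\vee)$-derivation on $A$ is a map $d:A\to A$ with $d(x\odot y)=(d(x)\odot y)\vee(x\odot d(y))$ for all $x,y\in A$. *)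

Record MVAlgebra := {
  mv_car :> Type;
  mv_oplus : mv_car -> mv_car -> mv_car;
  mv_neg : mv_car -> mv_car;
  mv_zero : mv_car;
  mv_assoc : forall x y z, mv_oplus x (mv_oplus y z) = mv_oplus (mv_oplus x y) z;
  mv_comm : forall x y, mv_oplus x y = mv_oplus y x;
  mv_zero_r : forall x, mv_oplus x mv_zero = x;
  mv_negK : forall x, mv_neg (mv_neg x) = x;
  mv_one_abs : forall x, mv_oplus x (mv_neg mv_zero) = mv_neg mv_zero;
  mv_luk : forall x y,
    mv_oplus (mv_neg (mv_oplus (mv_neg x) y)) y
    = mv_oplus (mv_neg (mv_oplus (mv_neg y) x)) x
}.

Arguments mv_oplus {m} _ _.
Arguments mv_neg {m} _.
Arguments mv_zero {m}.

Section Ops.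
Variable A : MVAlgebra.

Definition mv_one : A := mv_neg mv_zero.
Definition mv_odot (x y : A) : A := mv_neg (mv_oplus (mv_neg x) (mv_neg y)).
Definition mv_le (x y : A) : Prop := mv_oplus (mv_neg x) y = mv_one.
Definition mv_join (x y : A) : A := mv_oplus (mv_odot x (mv_neg y)) y.
Definition mv_meet (x y : A) : A := mv_odot x (mv_oplus (mv_neg x) y).

Definition in_boolean_center (x : A) : Prop := mv_oplus x x = x.

Definition is_odot_join_derivation (d : A -> A) : Prop :=
  forall x y : A, d (mv_odot x y) = mv_join (mv_odot (d x) y) (mv_odot x (d y)).
End Ops.

Arguments mv_one {A}.
Arguments mv_odot {A} _ _.
Arguments mv_le {A} _ _.
Arguments mv_join {A} _ _.
Arguments mv_meet {A} _ _.
Arguments in_boolean_center {A} _.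
Arguments is_odot_join_derivation {A} _.


(* Two facts about a (odot,vee)-derivation d carry the argument:
   (1) d is decreasing: d x <= x.  Indeed d 0 = 0, and expanding
       0 = d (x (.) x^* ) = (d x (.) x^* ) vee (x (.) d (x^* )) forces
       d x (.) x^* = 0, which unfolds to (d x)^* (+) x = 1, i.e. d x <= x.
   (2) A Boolean element b below a is absorbed: a (.) b = b (and b (.) b = b).
   With b := d a, Boolean and (by (1)) below a, the derivation rule gives
       d (d a) = d (a (.) d a) = (d a (.) d a) vee (a (.) d (d a))
               = d a vee (a (.) d (d a)) >= d a,
   while d (d a) <= d a by (1); antisymmetry of the natural order concludes. *)

Section MVFacts.
Variable A : MVAlgebra.
Local Notation "x ++ y" := (@mv_oplus A x y).
Local Notation "x ^*" := (@mv_neg A x) (at level 30).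
Local Notation z := (@mv_zero A).

Lemma oplus_0l (x : A) : z ++ x = x.
Proof. rewrite mv_comm. apply mv_zero_r. Qed.

Lemma oplus_neg_l (x : A) : x^* ++ x = mv_one.
Proof.
  pose proof (mv_luk A mv_one x) as H. unfold mv_one in *.
  rewrite mv_negK, oplus_0l in H. rewrite H. apply mv_one_abs.
Qed.

Lemma le_refl (x : A) : mv_le x x.
Proof. apply oplus_neg_l. Qed.

Lemma le_oplus_r (x y : A) : mv_le x (x ++ y).
Proof.
  unfold mv_le. rewrite mv_assoc, oplus_neg_l. unfold mv_one.
  rewrite mv_comm. apply mv_one_abs.
Qed.

Lemma le_antisym (x y : A) : mv_le x y -> mv_le y x -> x = y.
Proof.
  unfold mv_le, mv_one; intros Hxy Hyx.
  pose proof (mv_luk A x y) as H. rewrite Hxy, Hyx, !mv_negK, !oplus_0l in H.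
  symmetry; exact H.
Qed.

Lemma le_decomp (x y : A) : mv_le x y -> y = x ++ (y^* ++ x)^*.
Proof.
  unfold mv_le, mv_one; intros Hxy.
  pose proof (mv_luk A x y) as H. rewrite Hxy, mv_negK, oplus_0l in H.
  rewrite mv_comm. exact H.
Qed.

Lemma oplus_le_mono (x y w : A) : mv_le x y -> mv_le (x ++ w) (y ++ w).
Proof.
  intros Hxy. rewrite (le_decomp x y Hxy).
  replace ((x ++ (y^* ++ x)^*) ++ w) with ((x ++ w) ++ (y^* ++ x)^*).
  - apply le_oplus_r.
  - rewrite <- !mv_assoc, (mv_comm A w). reflexivity.
Qed.

Lemma le_neg (x y : A) : mv_le x y -> mv_le (y^*) (x^*).
Proof. unfold mv_le. rewrite mv_negK, mv_comm. trivial. Qed.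

Lemma oplus_eq0_r (x y : A) : x ++ y = z -> y = z.
Proof.
  intros H. pose proof (le_oplus_r y x) as Hle. rewrite mv_comm, H in Hle.
  unfold mv_le, mv_one in Hle. rewrite mv_zero_r in Hle.
  rewrite <- (mv_negK A y), Hle, mv_negK. reflexivity.
Qed.

Lemma odot_0l (y : A) : mv_odot z y = z.
Proof. unfold mv_odot. rewrite mv_comm, mv_one_abs, mv_negK. reflexivity. Qed.

Lemma odot_0r (y : A) : mv_odot y z = z.
Proof. unfold mv_odot. rewrite mv_one_abs, mv_negK. reflexivity. Qed.

Lemma odot_1r (y : A) : mv_odot y mv_one = y.
Proof. unfold mv_odot, mv_one. rewrite mv_negK, mv_zero_r, mv_negK. reflexivity. Qed.

Lemma odot_neg_r (x : A) : mv_odot x (x^*) = z.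
Proof. unfold mv_odot. rewrite mv_negK, oplus_neg_l. apply mv_negK. Qed.

Lemma le_join_l (u v : A) : mv_le u (mv_join u v).
Proof. unfold mv_join, mv_odot. rewrite mv_negK, mv_luk, mv_comm. apply le_oplus_r. Qed.

Lemma boolean_neg (b : A) : in_boolean_center b -> in_boolean_center (b^*).
Proof.
  unfold in_boolean_center. intros Hb. apply le_antisym.
  - pose proof (mv_luk A (b^*) b) as H. rewrite mv_negK, Hb, oplus_neg_l in H.
    unfold mv_le. symmetry. exact H.
  - apply le_oplus_r.
Qed.

Lemma odot_boolean_below (a b : A) :
  mv_le b a -> in_boolean_center b -> mv_odot a b = b.
Proof.
  intros Hba Hb. pose proof (boolean_neg b Hb) as Hb'.
  unfold in_boolean_center in Hb'.
  assert (E : a^* ++ b^* = b^*).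
  { apply le_antisym.
    - pose proof (oplus_le_mono _ _ (b^*) (le_neg _ _ Hba)) as M.
      rewrite Hb' in M. exact M.
    - rewrite mv_comm. apply le_oplus_r. }
  unfold mv_odot. rewrite E. apply mv_negK.
Qed.

Lemma derivation_zero (d : A -> A) : is_odot_join_derivation d -> d z = z.
Proof.
  intros D. pose proof (D z z) as H. rewrite !odot_0l, odot_0r in H.
  rewrite H. unfold mv_join. rewrite mv_zero_r. apply odot_0l.
Qed.

Lemma derivation_le (d : A -> A) (x : A) :
  is_odot_join_derivation d -> mv_le (d x) x.
Proof.
  intros D. pose proof (D x (x^*)) as H.
  rewrite odot_neg_r, derivation_zero in H by exact D.
  unfold mv_join in H. symmetry in H.
  (* the join is 0, so both x (.) d (x^* ) and d x (.) x^* vanish *)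
  pose proof (oplus_eq0_r _ _ H) as Hq. rewrite Hq in H.
  change (z^*) with (@mv_one A) in H. rewrite odot_1r, mv_zero_r in H.
  unfold mv_odot in H. rewrite mv_negK in H.
  unfold mv_le. rewrite <- (mv_negK A (_ ++ _)), H. reflexivity.
Qed.

End MVFacts.

Theorem proposition3p8 (A : MVAlgebra) (d : A -> A) (a : A) :
  is_odot_join_derivation d -> in_boolean_center (d a) -> d (d a) = d a.
Proof.
  intros D Hb.
  (* d a is Boolean and below a, so it absorbs both a and itself under (.) *)
  assert (Ea : mv_odot a (d a) = d a)
    by exact (odot_boolean_below A a (d a) (derivation_le A d a D) Hb).
  assert (Eda : mv_odot (d a) (d a) = d a)
    by exact (odot_boolean_below A (d a) (d a) (le_refl A (d a)) Hb).
  apply le_antisym.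
  - apply derivation_le, D.
  - (* d (d a) = d (a (.) d a) = d a vee (a (.) d (d a)) >= d a *)
    pose proof (D a (d a)) as H. rewrite Ea, Eda in H.
    rewrite H. apply le_join_l.
Qed.
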